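(* Let $\mathcal{H}$ be an infinite, continuous index set of estimation tasks (with continuous estimates and errors), let $S_{\text{def}}$ be a random defining dataset with realization $s$, and for each $h\in\mathcal{H}$ let $\theta_h$ be an unknown target estimand, $\hat\theta_h=\hat\theta_h(s)$ an estimate computed from $S_{\text{def}}$, and $e_h=e_h(s)\in\mathbb{R}$ an error. Let $\mathcal{E}(s):=\{(h,\hat\theta_h(s),\theta_h,e_h(s)):h\in\mathcal{H}\}$, and given $S_{\text{def}}=s$ let $S_{\text{err}}$ be drawn from a distribution $\mathcal{D}$ (possibly depending on $s$). Suppose there are functions $\hat u(S_{\text{err}},h,\lambda)\in\mathbb{R}$ with $\Pr_{S_{\text{err}}\sim\mathcal{D}}(\hat u(S_{\text{err}},h,\lambda)\ge e_h\mid\mathcal{E}(s))\ge 1-\lambda$ for all $h\in\mathcal{H}$, $\lambda\in(0,1)$. Let $\hat\xi(S_{\text{err}},\delta):=\sup_{h\in\mathcal{H}}\hat u(S_{\text{err}},h,\delta)$. Then for any $\delta\in(0,1)$, $$\Pr_{S_{\text{err}}\sim\mathcal{D}}\Big(\hat\xi(S_{\text{err}},\delta)\ge\sup_{h\in\mathcal{H}}e_h\,\Big|\,\mathcal{E}(s)\Big)\ge 1-\delta\quad\text{and}\quad \Pr_{(S_{\text{def}},S_{\text{err}})}\Big(\hat\xi(S_{\text{err}},\delta)\ge\sup_{h\in\mathcal{H}}e_h\Big)\ge 1-\delta .$$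
   Context: Conditioning on $\mathcal{E}(s)$ means conditioning on $S_{\text{def}}=s$, so estimates and errors are fixed with respect to the randomness of $S_{\text{err}}$; $S_{\text{err}}$ is not used to construct the estimates. *)

From HB Require Import structures.
From mathcomp Require Import all_boot all_order all_algebra.
From mathcomp Require Import all_classical all_reals all_analysis.
From mathcomp Require Import measurable_realfun.
Set Implicit Arguments. Unset Strict Implicit. Unset Printing Implicit Defensive.
Import Order.TTheory GRing.Theory Num.Theory.
Local Open Scope classical_set_scope.
Local Open Scope ring_scope.
Local Open Scope ereal_scope.

(* Joint law of (S_def, S_err): S_def ~ P1, and given S_def = s,
   S_err ~ D s (a probability kernel). Probability of an event A. *)
Definition joint_prob (d1 d2 : measure_display) (T1 : measurableType d1)
  (T2 : measurableType d2) (R : realType) (P1 : probability T1 R)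
  (D : R.-pker T1 ~> T2) (A : set (T1 * T2)) : \bar R :=
  \int[P1]_s D s [set x | A (s, x)].

Definition xi_hat (T2 : Type) (R : realType) (H : Type)
  (u : T2 -> H -> R -> R) (x : T2) (delta : R) : \bar R :=
  ereal_sup [set (u x h delta)%:E | h in [set: H]].

Definition sup_err (T1 : Type) (R : realType) (H : Type)
  (e : H -> T1 -> R) (s : T1) : \bar R :=
  ereal_sup [set (e h s)%:E | h in [set: H]].

From HB Require Import structures.
From mathcomp Require Import all_boot all_order all_algebra.
From mathcomp Require Import all_classical all_reals all_analysis.
From mathcomp Require Import measurable_realfun.
Set Implicit Arguments. Unset Strict Implicit. Unset Printing Implicit Defensive.
Import Order.TTheory GRing.Theory Num.Theory.
Local Open Scope classical_set_scope.
Local Open Scope ring_scope.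
Local Open Scope ereal_scope.

(* For every h, the event {e_h <= u_h} lies inside {e_h <= sup u}, so
   each event {r <= sup u} with r < sup e has conditional probability at least
   1 - delta; approximating sup e from below, continuity from above of the
   probability D s carries the bound over to {sup e <= sup u}. Integrating this
   conditional bound against the law of S_def gives the joint bound. *)

Lemma ereal_nondecreasing_below (R : realType) (S : \bar R) : -oo < S ->
  exists s : nat -> R, [/\ nondecreasing_seq s, forall n, (s n)%:E < S
    & forall y, (forall n, (s n)%:E <= y) -> S <= y].
Proof.
case: S => [r | _ | //]; last first.
  exists (fun n => n%:R); split=> [m n mn | n | y ny]; first by rewrite ler_nat.
    by rewrite ltry.
  rewrite leye_eq; apply/eqP/eqyP => A A0.
  by apply: le_trans (ny (Num.truncn A).+1); rewrite lee_fin ltW // truncnS_gt.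
exists (fun n => r - n.+1%:R^-1)%R; split=> [m n mn | n | y ry].
- by rewrite lerD2l lerN2 lef_pV2 ?posrE // ler_nat.
- by rewrite lte_fin ltrBlDr ltrDl invr_gt0.
apply/lee_subgt0Pr => e e0; apply: le_trans (ry (Num.truncn e^-1)).
by rewrite lee_fin lerD2l lerN2 ltW // invf_plt ?posrE // truncnS_gt.
Qed.

Section superlevel_sets.
Context d (T : measurableType d) (R : realType).
Variable mu : {measure set T -> \bar R}.

Lemma measure_bigcap_ge (B : nat -> set T) (c : \bar R) :
  mu (B 0%N) < +oo -> (forall n, measurable (B n)) ->
  {homo B : n m / (n <= m)%N >-> (m <= n)%O} ->
  (forall n, c <= mu (B n)) -> c <= mu (\bigcap_n B n).
Proof.
move=> B0fin mB Bdecr cB.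
have cvgB := nonincreasing_cvg_mu B0fin mB (bigcapT_measurable mB) Bdecr.
rewrite -(cvg_lim _ cvgB) //; apply: lime_ge; last exact: nearW.
by apply/cvg_ex; exists (mu (\bigcap_n B n)).
Qed.

Variable f : T -> \bar R.
Hypothesis mf : measurable_fun setT f.

Lemma measurable_superlevel (y : \bar R) : measurable [set x | y <= f x].
Proof.
by rewrite -[X in measurable X]setTI; apply: measurable_lee => //; exact: measurable_cst.
Qed.

Lemma measure_superlevel_ge (S c : \bar R) :
  mu setT < +oo -> c <= mu setT ->
  (forall r : R, r%:E < S -> c <= mu [set x | r%:E <= f x]) ->
  c <= mu [set x | S <= f x].
Proof.
move=> mufin cT cS.
have [->|S_neqNy] := eqVneq S -oo.
  by rewrite (_ : [set x | _] = setT) //; apply/seteqP; split=> x // _ /=; exact: leNye.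
have S_gtNy : -oo < S by rewrite ltNye.
have [s [s_incr s_lt s_sup]] := ereal_nondecreasing_below S_gtNy.
have -> : [set x | S <= f x] = \bigcap_n [set x | (s n)%:E <= f x].
  apply/seteqP; split=> [x Sx n _ | x sx] /=; first exact: le_trans (ltW (s_lt n)) Sx.
  by apply: s_sup => n; exact: sx.
apply: measure_bigcap_ge => [|n|m n mn|n]; last exact/cS/s_lt.
- apply: le_lt_trans mufin; apply: le_measure; rewrite ?inE //.
  exact: measurable_superlevel.
- exact: measurable_superlevel.
- by apply/subsetPset => x /=; apply: le_trans; rewrite lee_fin s_incr.
Qed.

End superlevel_sets.

Lemma measure_sup_le_sup_ge d (T : measurableType d) (R : realType)
  (mu : {measure set T -> \bar R}) (I : Type) (a : I -> R) (g : I -> T -> R)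
  (c : \bar R) :
  mu setT < +oo -> c <= mu setT -> (forall i, measurable_fun setT (g i)) ->
  measurable_fun setT (fun x => ereal_sup [set (g i x)%:E | i in setT]) ->
  (forall i, c <= mu [set x | (a i <= g i x)%R]) ->
  c <= mu [set x | ereal_sup [set (a i)%:E | i in setT]
                   <= ereal_sup [set (g i x)%:E | i in setT]].
Proof.
move=> mufin cT mg msup cg; apply: measure_superlevel_ge => // r.
move=> /ereal_sup_gt[_ [i _ <-]] r_lt_ai; apply: le_trans (cg i) _.
apply: le_measure; rewrite ?inE; last 2 first.
- exact: measurable_superlevel.
- move=> x /= ai_le_gix; apply: le_trans (ltW r_lt_ai) _.
  apply: (@le_trans _ _ (g i x)%:E); first by rewrite lee_fin.
  by apply: ereal_sup_ubound; exists i.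
exact: measurable_superlevel ((measurable_EFinP _ _).2 (mg i)) (a i)%:E.
Qed.

Lemma joint_prob_ge d1 d2 (T1 : measurableType d1) (T2 : measurableType d2)
  (R : realType) (P1 : probability T1 R) (D : R.-pker T1 ~> T2)
  (A : set (T1 * T2)) (c : R) :
  (0 <= c)%R -> measurable A -> (forall s, c%:E <= D s [set x | A (s, x)]) ->
  c%:E <= joint_prob P1 D A.
Proof.
move=> c_ge0 mA cA.
have -> : c%:E = \int[P1]_s cst c%:E s.
  by rewrite integral_cst // [X in _ * X]probability_setT mule1.
apply: ge0_le_integral => //.
have := measurable_fun_xsection_finite_kernel D (mem_set mA).
congr measurable_fun; apply/funext => s; congr (D s _).
by apply/seteqP; split=> x /=; rewrite /xsection /= in_setE.
Qed.

Theorem theoremD1 (R : realType) (H : Type)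
  (d1 d2 : measure_display) (T1 : measurableType d1) (T2 : measurableType d2)
  (P1 : probability T1 R) (D : R.-pker T1 ~> T2)
  (theta : H -> R) (theta_hat : H -> T1 -> R) (e : H -> T1 -> R)
  (u : T2 -> H -> R -> R) (delta : R) :
  infinite_set [set: H] ->
  (forall h lambda, measurable_fun [set: T2] (fun x => u x h lambda)) ->
  (forall s h lambda, (0 < lambda < 1)%R ->
     D s [set x | (e h s <= u x h lambda)%R] >= (1 - lambda)%:E) ->
  measurable_fun [set: T2] (fun x => xi_hat u x delta) ->
  measurable_fun [set: T1] (sup_err e) ->
  (0 < delta < 1)%R ->
  (forall s, D s [set x | sup_err e s <= xi_hat u x delta] >= (1 - delta)%:E) /\
  joint_prob P1 D [set p | sup_err e p.1 <= xi_hat u p.2 delta] >= (1 - delta)%:E.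
Proof.
move=> _ u_meas u_bound mxi msup delta01.
have /andP[delta_gt0 delta_lt1] := delta01.
have conditional s : (1 - delta)%:E <= D s [set x | sup_err e s <= xi_hat u x delta].
  apply: measure_sup_le_sup_ge (fun h => u_meas h delta) mxi
    (fun h => u_bound s h delta delta01); rewrite prob_kernel ?ltry //.
  by rewrite lee_fin lerBlDr lerDl ltW.
split=> //; apply: joint_prob_ge => //; first by rewrite subr_ge0 ltW.
rewrite -[X in measurable X]setTI; apply: measurable_lee => //.
- exact: measurableT_comp msup measurable_fst.
- exact: measurableT_comp mxi measurable_snd.
Qed.
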